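(* Let the total budget satisfy $\mathrm{TB}>0$. There is no game form $G$ such that $*+G=0$, where $*=\{0\mid 0\}$.
   Context: Game forms are defined recursively: $G=\{G^{\mathcal L}\mid G^{\mathcal R}\}$ with finite sets of Left and Right options, and finite birthday. $0=\{\varnothing\mid\varnothing\}$, $*=\{0\mid 0\}$. The budget set for total budget $\mathrm{TB}$ is $\mathcal B=\{0,\dots,\mathrm{TB},\hat 0,\dots,\widehat{\mathrm{TB}}\}$: state $p$ (resp. $\hat p$) means Left holds $p$ dollars and Right holds $\mathrm{TB}-p$, and Right (resp. Left) holds the tie-breaking marker. Play of $(G,\tilde p)$: at every position (terminal ones included) both players bid simultaneously, Left $\ell\in\{0,\dots,p\}$, Right $r\in\{0,\dots,\mathrm{TB}-p\}$. If Left holds the marker (state $\hat p$): if $\ell>r$ Left moves to $(G^L,\widehat{p-\ell})$, or, including the marker (allowed when $\ell\ge r$), to $(G^L,p-\ell)$; if $\ell=r$ Left wins, the marker passes to Right, play continues at $(G^L,p-\ell)$; if $\ell<r$ Right moves to $(G^R,\widehat{p+r})$. Symmetrically when Right holds the marker (state $p$): if $r>\ell$ Right moves to $(G^R,p+r)$ or, including the marker, to $(G^R,\widehat{p+r})$; if $r=\ell$ Right wins, the marker passes to Left, play continues at $(G^R,\widehat{p+r})$; if $r<\ell$ Left moves to $(G^L,p-\ell)$. A player who wins a bid but has no option loses. $o(G,\tilde p)\in\{\mathrm L,\mathrm R\}$ is the winner under optimal play; $\mathrm L>\mathrm R$. Disjunctive sum $G+H=\{G^{\mathcal L}+H,G+H^{\mathcal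 L}\mid G^{\mathcal R}+H,G+H^{\mathcal R}\}$. $G\ge H$ means $o(G+X,\tilde p)\ge o(H+X,\tilde p)$ for all game forms $X$ and all $\tilde p\in\mathcal B$; $G=H$ means $G\ge H$ and $H\ge G$. *)

From mathcomp Require Import all_boot.
Set Implicit Arguments. Unset Strict Implicit. Unset Printing Implicit Defensive.

(* Game forms: finite lists of Left and Right options; finite birthday is
   automatic (inductive type). *)
Inductive game : Type := Game : seq game -> seq game -> game.

Definition left_opts (G : game) := let: Game Ls _ := G in Ls.
Definition right_opts (G : game) := let: Game _ Rs := G in Rs.

Definition zero : game := Game [::] [::].
Definition star : game := Game [:: zero] [:: zero].

Fixpoint add (G : game) : game -> game :=
  fix addG (H : game) : game :=
    match G, H with
    | Game GL GR, Game HL HR =>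
        Game ([seq add g H | g <- GL] ++ [seq addG h | h <- HL])
             ([seq add g H | g <- GR] ++ [seq addG h | h <- HR])
    end.

(* Budget state: p = Left's dollars (Right holds TB - p);
   m = true  means state \hat p (Left holds the tie-breaking marker),
   m = false means state p    (Right holds the marker).
   lwins TB G p m == Left can force a win from (G, state): Left chooses a bid
   l in {0..p} such that for every Right bid r in {0..TB-p} the ensuing play
   is a Left win; the bid winner chooses the option (and, where allowed,
   whether to hand over the marker); a bid winner with no option loses
   (empty [has] is false, empty [all] is true). *)
Fixpoint lwins (TB : nat) (G : game) (p : nat) (m : bool) {struct G} : bool :=
  match G with
  | Game Ls Rs =>
    has (fun l =>
      all (fun r =>
        if m then
          if r < l then
            has (fun GL => lwins TB GL (p - l) true || lwins TB GL (p - l) false) Ls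
          else if l == r then
            has (fun GL => lwins TB GL (p - l) false) Ls
          else
            all (fun GR => lwins TB GR (p + r) true) Rs
        else
          if l < r then
            all (fun GR => lwins TB GR (p + r) false && lwins TB GR (p + r) true) Rs
          else if l == r then
            all (fun GR => lwins TB GR (p + r) true) Rs
          else
            has (fun GL => lwins TB GL (p - l) false) Ls)
      (iota 0 (TB - p).+1))
    (iota 0 p.+1)
  end.

Inductive outcome : Type := OL | OR.

Definition outc (TB : nat) (G : game) (p : nat) (m : bool) : outcome :=
  if lwins TB G p m then OL else OR.

Definition outcome_le (a b : outcome) : bool :=
  match a, b with
  | OL, OR => false
  | _, _ => true
  end.

Definition game_ge (TB : nat) (G H : game) : Prop :=
  forall (X : game) (p : nat) (m : bool), p <= TB ->
    outcome_le (outc TB (add H X) p m) (outc TB (add G X) p m).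

Definition game_eq (TB : nat) (G H : game) : Prop :=
  game_ge TB G H /\ game_ge TB H G.

(* The game [0 + 0] is lost by whoever wins the bid, so the player without
   the marker wins it.  If [* + G = 0], compare the two sides with [X = 0]:
   [* + G + 0] has the common Left and Right option [C = 0 + G + 0].  When
   Right has all the money and the marker, Left must win [* + G + 0]; Right
   may bid 0, win the tie and move to [C], handing Left the marker, so Left
   wins [C] with no money and the marker.  When Left has all the money and
   the marker, Left must lose [* + G + 0]; yet Left can bid everything, win
   the bid outright, keep the marker and move to [C]. *)
From mathcomp Require Import all_boot.

Set Implicit Arguments.
Unset Strict Implicit.

Lemma outc_leE TB G H p m :
  outcome_le (outc TB H p m) (outc TB G p m) = (lwins TB H p m ==> lwins TB G p m).
Proof. by rewrite /outc; do 2 case: lwins. Qed.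

Lemma lwins_zero_marker TB p : lwins TB zero p true = false.
Proof. by apply/hasPn => -[|l] _. Qed.

Lemma lwins_zero TB p : lwins TB zero p false.
Proof.
by rewrite /=; apply/orP; left; apply/allP => r; rewrite mem_iota => /andP[-> _].
Qed.

Lemma lwins_penniless_right_opts TB G :
  lwins TB G 0 false -> all (fun GR => lwins TB GR 0 true) (right_opts G).
Proof. by case: G => Ls Rs /= /orP[/andP[] | ]. Qed.

Lemma lwins_all_in_left_opts TB G : 0 < TB ->
  has (fun GL => lwins TB GL 0 true) (left_opts G) -> lwins TB G TB true.
Proof.
case: G => Ls Rs TB_gt0 winGL.
apply/hasP; exists TB; first by rewrite mem_iota ltnSn.
apply/allP => r; rewrite subnn mem_iota ltnS leqn0 => /eqP ->.
by rewrite TB_gt0; apply: sub_has winGL => GL win_GL; apply/orP; left.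
Qed.

Lemma lwins_common_option TB C Ls Rs : 0 < TB ->
  lwins TB (Game (C :: Ls) (C :: Rs)) 0 false ->
  lwins TB (Game (C :: Ls) (C :: Rs)) TB true.
Proof.
move=> TB_gt0 /lwins_penniless_right_opts /andP[winC _].
by apply: lwins_all_in_left_opts => //=; rewrite winC.
Qed.

Lemma add_star_zero G :
  exists C Ls Rs, add (add star G) zero = Game (C :: Ls) (C :: Rs).
Proof. by case: G => GL GR; do 3 eexists. Qed.

Theorem mainTheorem6 (TB : nat) (hTB : 0 < TB) :
  ~ (exists G : game, game_eq TB (add star G) zero).
Proof.
case=> G [ge_starG ge_zero].
have zero_add_zero : add zero zero = zero by [].
have := ge_starG zero 0 false (leq0n TB).
rewrite outc_leE zero_add_zero lwins_zero implyTb.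
have := ge_zero zero TB true (leqnn TB).
rewrite outc_leE zero_add_zero lwins_zero_marker implybF.
have [C [Ls [Rs ->]]] := add_star_zero G.
by move=> /negP loses /(lwins_common_option hTB).
Qed.
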